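(* Let $\ell\ge 3$ be a fixed integer. For a positive integer $k$, let $G_{\ell,k}$ be the graph constructed as follows: take disjoint paths $x_{0,r}x_{1,r}\cdots x_{\ell,r}$ for $1\le r\le k$, identify $x_{0,1},\dots,x_{0,k}$ into a single vertex $u$, identify $x_{\ell,1},\dots,x_{\ell,k}$ into a single vertex $v$, and add the edge $uv$. Take $u$ as the special vertex. Then for every $k$ sufficiently large and every $1\le r\le k$, the spectral path from $x_{\ell-1,r}$ to $u$ in $G_{\ell,k}$ has length $\ell-1$, while the distance between $x_{\ell-1,r}$ and $u$ is $2$.
   Context: For a finite connected graph $G$ with Laplacian $L=D-A$ and special vertex $s$ such that $G-s$ is connected, let $L_s$ be $L$ with row and column $s$ deleted, and let $f_s$ be an eigenvector of $L_s$ for its smallest eigenvalue, chosen positive on $V\setminus\{s\}$ (possible by a result of Steinerberger), extended by $f_s(s)=0$. Every vertex $x\ne s$ has a neighbor with strictly smaller $f_s$-value. The spectral tree $T_s$ is formed by joining each vertex $x\neq s$ to a neighbor minimizing $f_s$ (ties broken arbitrarily); the spectral path from $x$ to $s$ is the unique path from $x$ to $s$ in $T_s$. Length of a path is its number of edges. *)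

From HB Require Import structures.
From mathcomp Require Import all_boot all_order all_algebra.
From mathcomp Require Import reals.
Set Implicit Arguments. Unset Strict Implicit. Unset Printing Implicit Defensive.
Import Order.TTheory GRing.Theory Num.Theory.
Local Open Scope ring_scope.

(* Laplacian L = D - A acting on functions: (L f)(x) = sum_{y ~ x} (f x - f y). *)
Definition lap (R : numDomainType) (V : finType) (adj : rel V) (f : V -> R) (x : V) : R :=
  \sum_(y | adj x y) (f x - f y).

(* g (extended by 0 at s) is an eigenvector of L_s (L with row/column s deleted)
   for eigenvalue mu.  For x <> s, (L_s g)(x) = (L g)(x) since g s = 0. *)
Definition reduced_eigvec (R : numDomainType) (V : finType) (adj : rel V) (s : V)
    (mu : R) (g : V -> R) : Prop :=
  g s = 0 /\ (exists x, g x != 0) /\ (forall x, x != s -> lap adj g x = mu * g x).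

Definition spectral_vector (R : realType) (V : finType) (adj : rel V) (s : V)
    (f : V -> R) : Prop :=
  (forall x, x != s -> 0 < f x) /\
  exists lam : R, reduced_eigvec adj s lam f /\
    (forall (mu : R) (g : V -> R), reduced_eigvec adj s mu g -> lam <= mu).

(* A spectral tree T_s: each x <> s is joined to p x, a neighbour of x
   minimising f (ties broken arbitrarily, i.e. any such choice p). *)
Definition spectral_parent (R : realType) (V : finType) (adj : rel V) (s : V)
    (f : V -> R) (p : V -> V) : Prop :=
  forall x, x != s -> adj x (p x) /\ (forall y, adj x y -> f (p x) <= f y).

Definition spectral_path_length (V : finType) (p : V -> V) (x s : V) (n : nat) : Prop :=
  iter n p x = s /\ (forall m, (m < n)%N -> iter m p x != s).

Definition graph_dist (V : finType) (adj : rel V) (x y : V) (n : nat) : Prop :=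
  (exists w : seq V, [/\ path adj x w, last x w = y & size w = n]) /\
  (forall w : seq V, path adj x w -> last x w = y -> (n <= size w)%N).

Unset Implicit Arguments.

(* Vertices: inl true = u, inl false = v, inr (r, j) = x_{j+1, r}
   (1 <= j+1 <= l-1, r ranging over 'I_k, i.e. the k paths). *)
Definition Gvert (l k : nat) : finType := (bool + ('I_k * 'I_l.-1))%type.

Definition Gu (l k : nat) : Gvert l k := inl true.
Definition Gv (l k : nat) : Gvert l k := inl false.

(* x_{i,r} for 0 <= i <= l (after identifications x_{0,r} = u, x_{l,r} = v).
   The final fallback branch is unreachable for 0 <= i <= l. *)
Definition xv (l k : nat) (r : 'I_k) (i : nat) : Gvert l k :=
  if i == 0%N then Gu l k
  else if i == l then Gv l k
  else match insub i.-1 with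
       | Some j => inr (r, j)
       | None => Gv l k
       end.

Definition Gadj (l k : nat) : rel (Gvert l k) := fun a b =>
  [|| (a == Gu l k) && (b == Gv l k),
      (a == Gv l k) && (b == Gu l k) |
      [exists r : 'I_k, exists i : 'I_l,
         ((a == xv l k r i) && (b == xv l k r i.+1)) ||
         ((b == xv l k r i) && (a == xv l k r i.+1))]].

From HB Require Import structures.
From mathcomp Require Import all_boot all_order all_algebra.
From mathcomp Require Import reals.
From mathcomp Require Import zify ring lra.
Set Implicit Arguments. Unset Strict Implicit. Unset Printing Implicit Defensive.
Import Order.TTheory GRing.Theory Num.Theory.
Local Open Scope ring_scope.

(* Write a_r(i) = f(x_{i,r}). At the interior vertices of the r-th path the
   eigen-equation says that the increments a_r(i+1) - a_r(i) drop by lam a_r(i);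
   with a_r(0) = 0 this fixes a_r up to a scalar, and since all paths end at v, all
   the a_r coincide with one profile a. The equation at v then reads
   a(l) + k (a(l) - a(l-1)) = lam a(l). It forces lam > 0, so the increments are
   nonincreasing, and for k >= 2 l^2 it also forces the last two increments to have a
   positive sum; hence a(i-1) < a(i+1) along the whole path. So the f-minimal
   neighbour of x_{i,r} is x_{i-1,r}, and the spectral path from x_{l-1,r} runs down
   its own path in l-1 steps, whereas x_{l-1,r} v u has length 2. *)

Definition delta (R : zmodType) (a : nat -> R) (j : nat) : R := a j.+1 - a j.

(* The eigen-equation -(a(j) - 2 a(j+1) + a(j+2)) = lam a(j+1) of the path 0 .. n
   at its interior vertices j+1, with no condition at the end vertices. *)
Definition path_eigen (R : pzRingType) (n : nat) (lam : R) (a : nat -> R) : Prop :=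
  forall j, (j.+2 <= n)%N -> delta a j.+1 = delta a j - lam * a j.+1.

Lemma path_eigen_proportional (R : fieldType) n (lam : R) (a b : nat -> R) :
  path_eigen n lam a -> path_eigen n lam b -> a 0%N = 0 -> b 0%N = 0 -> a 1%N != 0 ->
  forall i, (i <= n)%N -> b i = b 1%N / a 1%N * a i.
Proof.
move=> ha hb a0 b0 a1; set c := b 1%N / a 1%N.
have two_steps i : (i < n)%N -> b i = c * a i /\ b i.+1 = c * a i.+1.
  elim: i => [|i IH] hi; first by rewrite a0 b0 mulr0 /c divfK.
  have [bi bi1] := IH (ltnW hi); split=> //.
  have := ha i hi; have := hb i hi; rewrite /delta bi bi1 => eb ea.
  by rewrite -[b i.+2](subrK (c * a i.+1)) eb -[a i.+2](subrK (a i.+1)) ea; ring.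
case=> [|i] hi; first by rewrite a0 b0 mulr0.
by have [] := two_steps i hi.
Qed.

Section PositivePathEigen.
Variables (R : realFieldType) (n : nat) (lam : R) (a : nat -> R).
Hypotheses (a0 : a 0%N = 0) (a_gt0 : forall i, (0 < i <= n)%N -> 0 < a i)
  (a_eigen : path_eigen n lam a).

Lemma delta0 : delta a 0 = a 1%N.
Proof. by rewrite /delta a0 subr0. Qed.

Lemma delta_ge_first : lam <= 0 -> forall j, (j < n)%N -> a 1%N <= delta a j.
Proof.
move=> lam_le0; elim=> [|j IH] hj; first by rewrite delta0.
rewrite a_eigen; last by lia.
have := IH (ltnW hj); have : 0 < a j.+1 by apply: a_gt0; lia.
nra.
Qed.

Lemma delta_nonincreasing : 0 <= lam ->
  forall i j, (i <= j < n)%N -> delta a j <= delta a i.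
Proof.
move=> lam_ge0 i; elim=> [|j IH] /andP [ij jn].
  by move: ij; rewrite leqn0 => /eqP ->.
have [-> //|ij'] := eqVneq i j.+1.
rewrite a_eigen; last by lia.
have := IH ltac:(lia); have : 0 < a j.+1 by apply: a_gt0; lia.
nra.
Qed.

Lemma le_mul_first : 0 <= lam -> forall i, (i <= n)%N -> a i <= i%:R * a 1%N.
Proof.
move=> lam_ge0; elim=> [|i IH] hi; first by rewrite a0 mul0r.
have : delta a i <= delta a 0 by apply: delta_nonincreasing; lia.
rewrite delta0 /delta -natr1 mulrDl mul1r; have := IH (ltnW hi); lra.
Qed.

Lemma delta_lower_bound : 0 <= lam ->
  forall j, (j < n)%N -> a 1%N - lam * (j%:R * (n%:R * a 1%N)) <= delta a j.
Proof.
move=> lam_ge0; elim=> [|j IH] hj; first by rewrite mul0r mulr0 subr0 delta0.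
rewrite a_eigen; last by lia.
have a1_gt0 : 0 < a 1%N by apply: a_gt0; lia.
have aj_le : a j.+1 <= n%:R * a 1%N.
  apply: le_trans (le_mul_first lam_ge0 _) _; first by lia.
  by apply: ler_wpM2r; [lra | rewrite ler_nat; lia].
have : lam * a j.+1 <= lam * (n%:R * a 1%N) by apply: ler_wpM2l.
have := IH (ltnW hj); rewrite -natr1; lra.
Qed.

Variable k : nat.
Hypotheses (n_ge2 : (2 <= n)%N) (k_ge : (2 * n ^ 2 <= k)%N)
  (a_boundary : a n + k%:R * delta a n.-1 = lam * a n).

(* [lra] does not look at section hypotheses, hence the explicit [have]. *)
Lemma boundary_delta_eq : k%:R * delta a n.-1 = (lam - 1) * a n.
Proof. by have := a_boundary; lra. Qed.

Lemma path_eigenvalue_gt0 : 0 < lam.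
Proof.
rewrite ltNge; apply/negP => lam_le0.
have d_ge : a 1%N <= delta a n.-1 by apply: delta_ge_first => //; lia.
have a1_gt0 : 0 < a 1%N by apply: a_gt0; lia.
have an_gt0 : 0 < a n by apply: a_gt0; lia.
have : 0 <= k%:R * delta a n.-1 by apply: mulr_ge0; [exact: ler0n | lra].
have : lam * a n <= 0 := mulr_le0_ge0 lam_le0 (ltW an_gt0).
have := boundary_delta_eq; lra.
Qed.

Lemma eigenvalue_lt1_mul_gt2 : lam < 1 -> 2 < lam * k%:R.
Proof.
move=> lam_lt1; have lam_gt0 := path_eigenvalue_gt0.
have a1_gt0 : 0 < a 1%N by apply: a_gt0; lia.
have an_gt0 : 0 < a n by apply: a_gt0; lia.
have k_gt0 : (0 : R) < k%:R by rewrite ltr0n; lia.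
have d_lt0 : delta a n.-1 < 0.
  by rewrite -(pmulr_rlt0 _ k_gt0) boundary_delta_eq; nra.
have d_ge : a 1%N - lam * (n.-1%:R * (n%:R * a 1%N)) <= delta a n.-1.
  by apply: delta_lower_bound; [exact: ltW | lia].
have prod_gt1 : 1 < lam * (n.-1%:R * n%:R).
  by rewrite -(ltr_pM2r a1_gt0) mul1r -!mulrA; lra.
have : n.-1%:R * n%:R <= (n%:R ^+ 2 : R) by rewrite -natrX -natrM ler_nat; nia.
have : 2 * n%:R ^+ 2 <= (k%:R : R) by rewrite -natrX -(natrM R 2) ler_nat.
nra.
Qed.

Lemma delta_last_pair_gt0 : 0 < delta a n.-2 + delta a n.-1.
Proof.
have an_gt0 : 0 < a n by apply: a_gt0; lia.
have an1_gt0 : 0 < a n.-1 by apply: a_gt0; lia.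
have k_gt0 : (0 : R) < k%:R by rewrite ltr0n; lia.
have prev : delta a n.-2 = delta a n.-1 + lam * a n.-1.
  have -> : n.-1 = n.-2.+1 by lia.
  by have := @a_eigen n.-2 ltac:(lia); lra.
have [lam_ge1 | lam_lt1] := lerP 1 lam.
  have : 0 <= delta a n.-1 by rewrite -(pmulr_rge0 _ k_gt0) boundary_delta_eq; nra.
  nra.
have sum_eq : delta a n.-2 + delta a n.-1 = (2 - lam) * delta a n.-1 + lam * a n.
  by rewrite prev /delta (ltn_predK n_ge2); ring.
rewrite -(pmulr_rgt0 _ k_gt0) sum_eq mulrDr mulrCA boundary_delta_eq.
rewrite (_ : _ + _ = a n * (lam * k%:R - (2 - lam) * (1 - lam))); last by ring.
have lam_gt0 := path_eigenvalue_gt0.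
have lam_k_gt2 := eigenvalue_lt1_mul_gt2 lam_lt1.
by apply: mulr_gt0 => //; nra.
Qed.

Lemma path_eigen_step2_increasing i : (0 < i < n)%N -> a i.-1 < a i.+1.
Proof.
case: i => [//|i] hi /=.
have lam_ge0 := ltW path_eigenvalue_gt0.
have := delta_nonincreasing lam_ge0 (i := i) (j := n.-2) ltac:(lia).
have := delta_nonincreasing lam_ge0 (i := i.+1) (j := n.-1) ltac:(lia).
have := delta_last_pair_gt0; rewrite /delta; lra.
Qed.

End PositivePathEigen.

Lemma interior_index l i : (0 < i < l)%N -> exists j : 'I_l.-1, i = j.+1.
Proof.
move=> hi; have jl : (i.-1 < l.-1)%N by lia.
by exists (Ordinal jl) => /=; lia.
Qed.

Section GraphStructure.
Variables l k : nat.
Implicit Types (r : 'I_k) (i : nat).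

Lemma eq_xvE r i (y : Gvert l k) : (0 < l)%N -> (i <= l)%N ->
  (xv l k r i == y) = match y with
    | inl b => if b then i == 0%N else i == l
    | inr (r', j) => (r == r') && (i == j.+1) end.
Proof.
move=> l_gt0 il; rewrite /xv /Gu /Gv.
have [-> | i_neq0] := eqVneq i 0%N.
  case: y => [[] | [r' j]]; rewrite -sum_eqE //= ?andbF //.
  by rewrite (eq_sym 0%N) (gtn_eqF l_gt0).
have [-> | i_neql] := eqVneq i l.
  case: y => [[] | [r' j]]; rewrite -sum_eqE //= ?eqxx ?(gtn_eqF l_gt0) //.
  by rewrite (gtn_eqF (_ : j.+1 < l)%N) ?andbF //; have := ltn_ord j; lia.
have i1 : (i.-1 < l.-1)%N by lia.
rewrite insubT /=.
case: y => [[] | [r' j]]; rewrite -sum_eqE /= ?(negbTE i_neq0) ?(negbTE i_neql) //.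
by rewrite xpair_eqE; congr (_ && _); rewrite -val_eqE /=; apply/eqP/eqP; lia.
Qed.

Lemma xv0 r : xv l k r 0 = Gu l k.
Proof. by []. Qed.

Lemma xv_last r : (0 < l)%N -> xv l k r l = Gv l k.
Proof. by move=> l_gt0; rewrite /xv eqxx gtn_eqF. Qed.

Lemma xv_inr r (j : 'I_l.-1) : xv l k r j.+1 = inr (r, j).
Proof. by apply/eqP; rewrite eq_xvE /= ?eqxx //; have := ltn_ord j; lia. Qed.

Lemma xv_inj r i i' : (0 < l)%N -> (i <= l)%N -> (i' <= l)%N ->
  (xv l k r i == xv l k r i') = (i == i').
Proof.
move=> l_gt0 il il'; have [-> | i'_gt0] := posnP i'; first by rewrite xv0 eq_xvE.
have [i'_lt | i'_gt | ->] := ltngtP i' l; [ | lia | by rewrite xv_last // eq_xvE].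
have [j ->] := interior_index (i := i') (l := l) ltac:(lia).
by rewrite xv_inr eq_xvE //= eqxx.
Qed.

Lemma Gadj_inr r (j : 'I_l.-1) y :
  Gadj l k (inr (r, j)) y = (xv l k r j == y) || (xv l k r j.+2 == y).
Proof.
have jl := ltn_ord j; have l_gt0 : (0 < l)%N by lia.
rewrite /Gadj /=; apply/existsP/orP.
- move=> [r' /existsP [i /orP [/andP [h1 h2] | /andP [h1 h2]]]].
  + move: h1; rewrite eq_sym eq_xvE //; last exact: ltnW.
    move=> /andP [/eqP <- /eqP ij]; right.
    by rewrite eq_sym (eqP h2) ij.
  + move: h2; rewrite eq_sym eq_xvE // => /andP [/eqP <- /eqP [ij]].
    by left; rewrite eq_sym (eqP h1) ij.
- have jl' : (j < l)%N by lia.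
  have jl'' : (j.+1 < l)%N by lia.
  move=> [h | h]; exists r; apply/existsP.
  + exists (Ordinal jl'); rewrite /= -(eqP h) -xv_inr !xv_inj ?eqxx ?orbT //; lia.
  + exists (Ordinal jl''); rewrite /= -(eqP h) -xv_inr !xv_inj ?eqxx //; lia.
Qed.

Lemma Gadj_v y : (0 < l)%N ->
  Gadj l k (Gv l k) y = (y == Gu l k) || [exists r, xv l k r l.-1 == y].
Proof.
move=> l_gt0; rewrite /Gadj /=; congr (_ || _).
apply/existsP/existsP => [[r /existsP [i /orP [/andP [h1 h2] | /andP [h1 h2]]]] | [r h]].
- move: h1; rewrite eq_sym eq_xvE ?(ltnW (ltn_ord i)) //= => /eqP il.
  by have := ltn_ord i; rewrite il ltnn.
- move: h2; rewrite eq_sym eq_xvE // => /eqP il; exists r.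
  by rewrite eq_sym (eqP h1) (_ : l.-1 = i) //; lia.
- have ll : (l.-1 < l)%N by lia.
  exists r; apply/existsP; exists (Ordinal ll); apply/orP; right.
  by rewrite /= -(eqP h) eqxx -(xv_last r l_gt0) xv_inj //; lia.
Qed.

Lemma lap_inr (R : numDomainType) (f : Gvert l k -> R) r (j : 'I_l.-1) :
  lap (Gadj l k) f (inr (r, j)) =
  (f (inr (r, j)) - f (xv l k r j)) + (f (inr (r, j)) - f (xv l k r j.+2)).
Proof.
have jl := ltn_ord j.
rewrite /lap -big_filter (perm_big [:: xv l k r j; xv l k r j.+2]).
  by rewrite !big_cons big_nil /= addr0.
apply: uniq_perm; first by rewrite filter_uniq // index_enum_uniq.
  by rewrite /= andbT inE xv_inj //; lia.
by move=> y; rewrite mem_filter mem_index_enum andbT Gadj_inr !inE !(eq_sym y).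
Qed.

Lemma lap_v (R : numDomainType) (f : Gvert l k -> R) : (2 <= l)%N ->
  lap (Gadj l k) f (Gv l k) =
  (f (Gv l k) - f (Gu l k)) + \sum_(r < k) (f (Gv l k) - f (xv l k r l.-1)).
Proof.
move=> l_ge2; have l_gt0 : (0 < l)%N by lia.
have [j lj] := interior_index (i := l.-1) (l := l) ltac:(lia).
have xv_pred r : xv l k r l.-1 = inr (r, j) by rewrite -xv_inr -lj.
rewrite /lap -big_filter (perm_big (Gu l k :: [seq xv l k r l.-1 | r <- enum 'I_k])).
  by rewrite big_cons big_map big_enum.
apply: uniq_perm; first by rewrite filter_uniq // index_enum_uniq.
  rewrite /= map_inj_uniq ?enum_uniq ?andbT; last first.
    by move=> r1 r2; rewrite !xv_pred => -[].
  by apply/mapP => -[r _]; rewrite xv_pred.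
move=> y; rewrite mem_filter mem_index_enum andbT Gadj_v // inE.
congr (_ || _); apply/existsP/mapP => [[r /eqP <-] | [r _ ->]]; last by exists r.
by exists r; rewrite ?mem_enum.
Qed.

Lemma graph_dist_xv_pred_u r : (3 <= l)%N ->
  graph_dist (Gadj l k) (xv l k r l.-1) (Gu l k) 2.
Proof.
move=> l_ge3; have l_gt0 : (0 < l)%N by lia.
have [j lj] := interior_index (i := l.-1) (l := l) ltac:(lia).
have -> : xv l k r l.-1 = inr (r, j) by rewrite -xv_inr -lj.
split.
- exists [:: Gv l k; Gu l k]; split => //=.
  rewrite andbT Gadj_inr -(xv_last r l_gt0); apply/orP; right.
  by rewrite xv_inj //; lia.
- case=> [| y [| z w]] //=.
  by rewrite andbT Gadj_inr => /[swap] ->; rewrite !eq_xvE //=; lia.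
Qed.

End GraphStructure.

Definition path_profile (T : Type) l k (f : Gvert l k -> T) (r : 'I_k) (i : nat) : T :=
  f (xv l k r i).

Section SpectralTree.
Variables (R : realType) (l k : nat) (lam : R) (f : Gvert l k -> R).
Hypotheses (f_u : f (Gu l k) = 0) (f_gt0 : forall x, x != Gu l k -> 0 < f x)
  (f_eigen : forall x, x != Gu l k -> lap (Gadj l k) f x = lam * f x).

Lemma path_profile0 r : path_profile f r 0 = 0.
Proof. by rewrite /path_profile xv0. Qed.

Lemma path_profile_gt0 r i : (0 < i <= l)%N -> 0 < path_profile f r i.
Proof. by move=> hi; apply: f_gt0; rewrite eq_xvE /=; lia. Qed.

Lemma path_profile_last r : (0 < l)%N -> path_profile f r l = f (Gv l k).
Proof. by move=> l_gt0; rewrite /path_profile xv_last. Qed.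

Lemma path_profile_eigen r : path_eigen l lam (path_profile f r).
Proof.
move=> j hj; have jl : (j < l.-1)%N by lia.
have := @f_eigen (inr (r, Ordinal jl)) isT.
rewrite lap_inr /delta /path_profile (xv_inr r (Ordinal jl)) /=.
lra.
Qed.

Lemma path_profile_indep r r' i : (0 < l)%N -> (i <= l)%N ->
  path_profile f r' i = path_profile f r i.
Proof.
move=> l_gt0 il.
have a1_neq0 : path_profile f r 1 != 0 by rewrite gt_eqF // path_profile_gt0.
have prop := path_eigen_proportional (path_profile_eigen r) (path_profile_eigen r')
  (path_profile0 r) (path_profile0 r') a1_neq0.
have fv_gt0 : 0 < f (Gv l k).
  by rewrite -(path_profile_last r l_gt0) path_profile_gt0 // l_gt0 /=.
have ratio1 : path_profile f r' 1 / path_profile f r 1 = 1.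
  apply: (mulIf (lt0r_neq0 fv_gt0)); rewrite mul1r.
  by rewrite -{1}(path_profile_last r l_gt0) -prop // path_profile_last.
by rewrite prop // ratio1 mul1r.
Qed.

Lemma path_profile_boundary r : (2 <= l)%N ->
  path_profile f r l + k%:R * delta (path_profile f r) l.-1 = lam * path_profile f r l.
Proof.
move=> l_ge2; have l_gt0 : (0 < l)%N by lia.
have := @f_eigen (Gv l k) isT.
rewrite lap_v // f_u subr0 -(path_profile_last r l_gt0).
rewrite (eq_bigr (fun=> delta (path_profile f r) l.-1)).
  by rewrite sumr_const card_ord mulr_natl.
move=> r' _; change (f (xv l k r' l.-1)) with (path_profile f r' l.-1).
by rewrite /delta (ltn_predK l_ge2) (path_profile_indep r r') //; lia.
Qed.

Variable p : Gvert l k -> Gvert l k.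
Hypotheses (l_ge2 : (2 <= l)%N) (k_ge : (2 * l ^ 2 <= k)%N)
  (p_parent : spectral_parent (Gadj l k) (Gu l k) f p).

Lemma path_profile_step2_increasing r i : (0 < i < l)%N ->
  path_profile f r i.-1 < path_profile f r i.+1.
Proof.
apply: (path_eigen_step2_increasing _ _ _ l_ge2 k_ge).
- exact: path_profile0.
- exact: path_profile_gt0.
- exact: path_profile_eigen.
- exact: path_profile_boundary.
Qed.

Lemma spectral_parent_xv r i : (0 < i < l)%N -> p (xv l k r i) = xv l k r i.-1.
Proof.
move=> hi; have [j ij] := interior_index hi; subst i.
have := path_profile_step2_increasing r (i := j.+1) ltac:(lia).
rewrite xv_inr /path_profile /=.
have [adj_p p_min] := @p_parent (inr (r, j)) isT.
move: adj_p; rewrite Gadj_inr => /orP [/eqP <- // | /eqP p_next] incr.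
have := p_min (xv l k r j); rewrite Gadj_inr eqxx -p_next => /(_ isT).
by rewrite leNgt incr.
Qed.

Lemma iter_spectral_parent_xv r i t : (i < l)%N -> (t <= i)%N ->
  iter t p (xv l k r i) = xv l k r (i - t).
Proof.
move=> il; elim: t => [|t IH] ti; first by rewrite subn0.
rewrite iterS IH; last by lia.
by rewrite spectral_parent_xv; [congr (xv _ _ _ _); lia | lia].
Qed.

Lemma spectral_path_length_xv r i : (i < l)%N ->
  spectral_path_length p (xv l k r i) (Gu l k) i.
Proof.
move=> il; split; first by rewrite iter_spectral_parent_xv // subnn.
by move=> t ti; rewrite iter_spectral_parent_xv ?eq_xvE //=; lia.
Qed.

End SpectralTree.

Theorem theorem17 (R : realType) (l : nat) (hl : (3 <= l)%N) :
  exists K : nat, forall k : nat, (K <= k)%N -> forall r : 'I_k,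
    (forall (f : Gvert l k -> R) (p : Gvert l k -> Gvert l k),
        spectral_vector (Gadj l k) (Gu l k) f ->
        spectral_parent (Gadj l k) (Gu l k) f p ->
        spectral_path_length p (xv l k r l.-1) (Gu l k) l.-1) /\
    graph_dist (Gadj l k) (xv l k r l.-1) (Gu l k) 2.
Proof.
exists (2 * l ^ 2)%N => k k_ge r; split; last exact: graph_dist_xv_pred_u.
move=> f p [f_gt0 [lam [[f_u [_ f_eigen]] _]]] p_parent.
by apply: (spectral_path_length_xv f_u f_gt0 f_eigen _ k_ge p_parent); lia.
Qed.
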